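(* Let $g$ be a regular expression over an alphabet of symbols, and let $x$ be a symbol that occurs exactly once (syntactically) in $g$. Let $\bar{x}_L, \bar{x}_R, \bar{y}_L, \bar{y}_R$ be finite (possibly empty) sequences of symbols. If $\bar{x}_L\, x\, \bar{y}_R \in [\![ g ]\!]$ and $\bar{y}_L\, x\, \bar{x}_R \in [\![ g ]\!]$, then $\bar{x}_L\, x\, \bar{x}_R \in [\![ g ]\!]$.
   Context: Regular expressions are generated by: the empty regex $\epsilon$; a single symbol $x_0$; alternation $g_L \mid g_R$; sequencing (concatenation) $g_L\, g_R$; and Kleene star $g_0^*$. The language $[\![ g ]\!]$ is the set of finite symbol sequences denoted by $g$ in the standard way: $[\![\epsilon]\!] = \{\text{empty sequence}\}$, $[\![x_0]\!]=\{x_0\}$, $[\![g_L\mid g_R]\!]=[\![g_L]\!]\cup[\![g_R]\!]$, $[\![g_L\,g_R]\!]$ is the set of concatenations $uv$ with $u\in[\![g_L]\!]$, $v\in[\![g_R]\!]$, and $[\![g_0^*]\!]=\bigcup_{n\ge 0}[\![g_0^n]\!]$ where $g_0^0=\epsilon$ and $g_0^{n+1}=g_0\,g_0^{n}$. Juxtaposition of sequences and symbols denotes concatenation. *)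

From Stdlib Require Import List.
Import ListNotations.

Inductive regex (A : Type) : Type :=
| Eps : regex A
| Sym : A -> regex A
| Alt : regex A -> regex A -> regex A
| Seq : regex A -> regex A -> regex A
| Star : regex A -> regex A.

Arguments Eps {A}.
Arguments Sym {A} _.
Arguments Alt {A} _ _.
Arguments Seq {A} _ _.
Arguments Star {A} _.

Fixpoint rpow {A : Type} (g : regex A) (n : nat) : regex A :=
  match n with
  | O => Eps
  | S n' => Seq g (rpow g n')
  end.

Inductive lang {A : Type} : regex A -> list A -> Prop :=
| lang_eps : lang Eps []
| lang_sym : forall x, lang (Sym x) [x]
| lang_altL : forall gL gR w, lang gL w -> lang (Alt gL gR) w
| lang_altR : forall gL gR w, lang gR w -> lang (Alt gL gR) w
| lang_seq : forall gL gR u v, lang gL u -> lang gR v -> lang (Seq gL gR) (u ++ v)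
| lang_star : forall g n w, lang (rpow g n) w -> lang (Star g) w.

Fixpoint occ {A : Type} (eqd : forall a b : A, {a = b} + {a <> b})
  (x : A) (g : regex A) : nat :=
  match g with
  | Eps => 0
  | Sym y => if eqd x y then 1 else 0
  | Alt gL gR => occ eqd x gL + occ eqd x gR
  | Seq gL gR => occ eqd x gL + occ eqd x gR
  | Star g0 => occ eqd x g0
  end.

(* Follow the unique occurrence of x through the derivation of a word.  In an
   alternation or a concatenation the x-free part of g contributes x-free
   factors, so both words are split at x in the same component and the
   induction hypothesis applies there.  Under a star, a word of g^* with x in it
   is u w v with u, v in g^* and w in g containing that x; gluing the prefix of
   one such w and the suffix of the other gives a word of g, and g^* is closed
   under concatenation. *)

From Stdlib Require Import List Lia.
Import ListNotations.

Section Lists.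
Context {A : Type}.

Lemma app_eq_app_elt (a b l r : list A) (x : A) :
  a ++ b = l ++ x :: r ->
  (exists c, a = l ++ x :: c /\ r = c ++ b) \/
  (exists c, l = a ++ c /\ b = c ++ x :: r).
Proof.
  intros E; apply app_eq_app in E as [[|y c] [[Ha Hb] | [Hl Hb]]]; simpl in *.
  - right; exists []; rewrite app_nil_r in *; subst; auto.
  - right; eauto.
  - injection Hb as -> ->; left; eauto.
  - right; eauto.
Qed.

Lemma app_eq_app_elt_notin_r (a b l r : list A) (x : A) :
  a ++ b = l ++ x :: r -> ~ In x b -> exists c, a = l ++ x :: c /\ r = c ++ b.
Proof.
  intros E Hb; destruct (app_eq_app_elt _ _ _ _ _ E) as [? | [c [_ ->]]]; auto.
  exfalso; apply Hb, in_elt.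
Qed.

Lemma app_eq_app_elt_notin_l (a b l r : list A) (x : A) :
  a ++ b = l ++ x :: r -> ~ In x a -> exists c, l = a ++ c /\ b = c ++ x :: r.
Proof.
  intros E Ha; destruct (app_eq_app_elt _ _ _ _ _ E) as [[c [-> _]] | ?]; auto.
  exfalso; apply Ha, in_elt.
Qed.

End Lists.

Section Languages.
Context {A : Type}.

Lemma lang_sym_inv (y : A) w : lang (Sym y) w -> w = [y].
Proof. intros H; inversion H; auto. Qed.

Lemma lang_seq_inv (gL gR : regex A) w :
  lang (Seq gL gR) w -> exists u v, w = u ++ v /\ lang gL u /\ lang gR v.
Proof. intros H; inversion H; subst; eauto. Qed.

Lemma lang_star_inv (g : regex A) w : lang (Star g) w -> exists n, lang (rpow g n) w.
Proof. intros H; inversion H; subst; eauto. Qed.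

Lemma lang_star_nil (g : regex A) : lang (Star g) [].
Proof. apply lang_star with 0; constructor. Qed.

Lemma lang_star_cons (g : regex A) u v :
  lang g u -> lang (Star g) v -> lang (Star g) (u ++ v).
Proof.
  intros Hu Hv; apply lang_star_inv in Hv as [n Hv].
  apply lang_star with (S n); constructor; auto.
Qed.

Lemma lang_star_app (g : regex A) u v :
  lang (Star g) u -> lang (Star g) v -> lang (Star g) (u ++ v).
Proof.
  intros Hu Hv; apply lang_star_inv in Hu as [n Hu]; revert u Hu.
  induction n as [|n IH]; simpl; intros u Hu; inversion Hu; subst; auto.
  rewrite <- app_assoc; apply lang_star_cons; auto.
Qed.

Lemma lang_rpow_elt (g : regex A) n x l r :
  lang (rpow g n) (l ++ x :: r) ->
  exists u l' r' v, l = u ++ l' /\ r = r' ++ v /\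
    lang (Star g) u /\ lang g (l' ++ x :: r') /\ lang (Star g) v.
Proof.
  revert l; induction n as [|n IH]; simpl; intros l H.
  - inversion H as [E | | | | |]; destruct l; discriminate.
  - apply lang_seq_inv in H as (a & b & E & Ha & Hb).
    destruct (app_eq_app_elt _ _ _ _ _ (eq_sym E)) as [[c [-> ->]] | [c [-> ->]]].
    + exists [], l, c, b; repeat split; auto using lang_star_nil.
      apply lang_star with n; auto.
    + destruct (IH c Hb) as (u & l' & r' & v & -> & -> & Hu & Hw & Hv).
      exists (a ++ u), l', r', v; rewrite app_assoc; repeat split; auto.
      apply lang_star_cons; auto.
Qed.

Lemma lang_star_elt (g : regex A) x l r :
  lang (Star g) (l ++ x :: r) ->
  exists u l' r' v, l = u ++ l' /\ r = r' ++ v /\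
    lang (Star g) u /\ lang g (l' ++ x :: r') /\ lang (Star g) v.
Proof. intros H; apply lang_star_inv in H as [n H]; eapply lang_rpow_elt; eauto. Qed.

End Languages.

Section Occurrence.
Variable A : Type.
Variable eqd : forall a b : A, {a = b} + {a <> b}.
Variable x : A.

Lemma occ_rpow0 (g : regex A) n : occ eqd x g = 0 -> occ eqd x (rpow g n) = 0.
Proof. intros H; induction n; simpl; lia. Qed.

Lemma lang_occ0_notin (g : regex A) w : lang g w -> occ eqd x g = 0 -> ~ In x w.
Proof.
  induction 1 as [| y | | | ? ? u v _ IHu _ IHv | ? n ? _ IH]; simpl; intros Ho.
  - auto.
  - destruct (eqd x y); [discriminate | intros [E | []]; auto].
  - apply IHlang; lia.
  - apply IHlang; lia.
  - rewrite in_app_iff; intros [I | I]; [apply IHu | apply IHv]; auto; lia.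
  - apply IH, occ_rpow0; auto.
Qed.

Lemma lang_alt_occ0_r (gL gR : regex A) w :
  occ eqd x gR = 0 -> In x w -> lang (Alt gL gR) w -> lang gL w.
Proof.
  intros Ho Hw H; inversion H; subst; auto.
  exfalso; eapply lang_occ0_notin; eauto.
Qed.

Lemma lang_alt_occ0_l (gL gR : regex A) w :
  occ eqd x gL = 0 -> In x w -> lang (Alt gL gR) w -> lang gR w.
Proof.
  intros Ho Hw H; inversion H; subst; auto.
  exfalso; eapply lang_occ0_notin; eauto.
Qed.

Lemma lang_seq_occ0_r (gL gR : regex A) l r :
  occ eqd x gR = 0 -> lang (Seq gL gR) (l ++ x :: r) ->
  exists c v, r = c ++ v /\ lang gL (l ++ x :: c) /\ lang gR v.
Proof.
  intros Ho H; apply lang_seq_inv in H as (u & v & E & Hu & Hv).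
  destruct (app_eq_app_elt_notin_r _ _ _ _ _ (eq_sym E)
              (lang_occ0_notin _ _ Hv Ho)) as (c & -> & ->).
  eauto.
Qed.

Lemma lang_seq_occ0_l (gL gR : regex A) l r :
  occ eqd x gL = 0 -> lang (Seq gL gR) (l ++ x :: r) ->
  exists u c, l = u ++ c /\ lang gL u /\ lang gR (c ++ x :: r).
Proof.
  intros Ho H; apply lang_seq_inv in H as (u & v & E & Hu & Hv).
  destruct (app_eq_app_elt_notin_l _ _ _ _ _ (eq_sym E)
              (lang_occ0_notin _ _ Hu Ho)) as (c & -> & ->).
  eauto.
Qed.

Lemma lang_exchange_occ1 (g : regex A) : forall l1 r1 l2 r2,
  occ eqd x g = 1 ->
  lang g (l1 ++ x :: r1) -> lang g (l2 ++ x :: r2) -> lang g (l1 ++ x :: r2).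
Proof.
  induction g as [| y | gL IHL gR IHR | gL IHL gR IHR | g IH]; simpl;
    intros l1 r1 l2 r2 Ho H1 H2.
  - discriminate.
  - apply lang_sym_inv, elt_eq_unit in H1 as (<- & -> & _).
    apply lang_sym_inv, elt_eq_unit in H2 as (_ & _ & ->).
    constructor.
  - pose proof (in_elt x l1 r1); pose proof (in_elt x l2 r2).
    assert (occ eqd x gL = 1 /\ occ eqd x gR = 0 \/ occ eqd x gL = 0 /\ occ eqd x gR = 1)
      as [[HL HR] | [HL HR]] by lia.
    + apply lang_altL; eapply IHL; eauto using lang_alt_occ0_r.
    + apply lang_altR; eapply IHR; eauto using lang_alt_occ0_l.
  - assert (occ eqd x gL = 1 /\ occ eqd x gR = 0 \/ occ eqd x gL = 0 /\ occ eqd x gR = 1)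
      as [[HL HR] | [HL HR]] by lia.
    + destruct (lang_seq_occ0_r _ _ _ _ HR H1) as (c1 & v1 & -> & P1 & _).
      destruct (lang_seq_occ0_r _ _ _ _ HR H2) as (c2 & v2 & -> & P2 & Q2).
      rewrite app_comm_cons, app_assoc; constructor; eauto.
    + destruct (lang_seq_occ0_l _ _ _ _ HL H1) as (u1 & c1 & -> & P1 & Q1).
      destruct (lang_seq_occ0_l _ _ _ _ HL H2) as (u2 & c2 & -> & _ & Q2).
      rewrite <- app_assoc; constructor; eauto.
  - destruct (lang_star_elt _ _ _ _ H1) as (u1 & l1' & r1' & v1 & -> & -> & U1 & W1 & _).
    destruct (lang_star_elt _ _ _ _ H2) as (u2 & l2' & r2' & v2 & -> & -> & _ & W2 & V2).
    replace ((u1 ++ l1') ++ x :: r2' ++ v2) with (u1 ++ (l1' ++ x :: r2') ++ v2)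
      by (rewrite <- !app_assoc; reflexivity).
    apply lang_star_app, lang_star_cons; eauto.
Qed.

End Occurrence.

Theorem mainTheorem1 (A : Type) (eqd : forall a b : A, {a = b} + {a <> b})
  (g : regex A) (x : A) (xL xR yL yR : list A) :
  occ eqd x g = 1 ->
  lang g (xL ++ [x] ++ yR) ->
  lang g (yL ++ [x] ++ xR) ->
  lang g (xL ++ [x] ++ xR).
Proof. exact (lang_exchange_occ1 A eqd x g xL yR yL xR). Qed.
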